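(* Let $A=\{a_s(n_s)\}_{s=1}^k$ and $B=\{b_t(m_t)\}_{t=1}^l$ be finite systems of residue classes with positive integer moduli and integers $0\leqslant a_s<n_s$, $0\leqslant b_t<m_t$, such that $n_1,\ldots,n_k$ are pairwise distinct and $m_1,\ldots,m_l$ are pairwise distinct. Let $p$ be a prime with $p>|S(n_1,\ldots,n_k,m_1,\ldots,m_l)|$ and let $\zeta_p$ be a primitive $p$th root of unity. Then $A$ and $B$ are identical (i.e., $k=l$ and $\{(a_s,n_s)\}_{s=1}^k=\{(b_t,m_t)\}_{t=1}^l$) if and only if $$\sum_{s=1}^k\frac{\zeta_p^{a_s}}{1-\zeta_p^{n_s}}=\sum_{t=1}^l\frac{\zeta_p^{b_t}}{1-\zeta_p^{m_t}}.$$
   Context: For a positive integer $n$ and $a\in\{0,\ldots,n-1\}$, $a(n)$ denotes the residue class $\{x\in\mathbb Z: x\equiv a \pmod n\}$. For positive integers $n_1,\ldots,n_k$, $S(n_1,\ldots,n_k)=\{r/n_s: r=0,\ldots,n_s-1;\ s=1,\ldots,k\}$, a set of rational numbers, and $|S(\cdot)|$ denotes its cardinality. *)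

From mathcomp Require Import all_boot all_order all_algebra all_field.
Set Implicit Arguments. Unset Strict Implicit. Unset Printing Implicit Defensive.

Definition Sset (ns : seq nat) : seq rat :=
  undup [seq ((r%:R : rat) / (n%:R : rat))%R | n <- ns, r <- iota 0 n].

Definition Scard (ns : seq nat) : nat := size (Sset ns).

From mathcomp Require Import all_boot all_order all_algebra all_field.
From mathcomp Require Import algC cyclotomic ring.
Import GRing.Theory Num.Theory.

(* Let D be the set of divisors of all moduli and Q = \prod_(d in D) Phi_d.
   The fractions r/d with d in D and coprime d r are distinct elements of S, so
   deg Q = \sum_(d in D) phi(d) < p.  For a class a(n) we have
   Q = (X^n - 1) * Q_n with Q_n = \prod_(d in D, ~~ d %| n) Phi_d, hence
   zeta^a / (1 - zeta^n) = - (X^a * Q_n)(zeta) / Q(zeta).  Equal sums thus make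
   the integer polynomials P_A = \sum_s X^(a_s) * Q_(n_s) and P_B, of degree
   < p - 1, agree at zeta_p, whose minimal polynomial Phi_p has degree p - 1:
   so P_A = P_B.  Finally P_A determines A: at a primitive M-th root of unity w,
   M the largest modulus, every Q_n with n < M contains the factor Phi_M, so
   P_A(w) is Q_M(w) * w^a if a(M) is in A and 0 otherwise.  This recovers the
   class of modulus M, and one descends on M. *)

Set Implicit Arguments.
Unset Strict Implicit.
Unset Printing Implicit Defensive.

Definition divisors_seq (ns : seq nat) : seq nat :=
  undup (flatten [seq divisors n | n <- ns]).

Lemma divisors_seqP ns d :
  reflect (exists2 n, n \in ns & d \in divisors n) (d \in divisors_seq ns).
Proof. by rewrite mem_undup; apply: flatten_mapP. Qed.

Lemma size_filter_coprime_iota d :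
  size [seq r <- iota 0 d | coprime d r] = totient d.
Proof.
rewrite size_filter totient_count_coprime -sum1_count big_mkcond /index_iota subn0.
by apply: eq_bigr => i _; case: coprime.
Qed.

Lemma coprime_frac_inj (r d r' d' : nat) :
  0 < d -> 0 < d' -> coprime d r -> coprime d' r' ->
  (r%:R / d%:R = r'%:R / d'%:R :> rat)%R -> d = d' /\ r = r'.
Proof.
have numden (u v : nat) : 0 < v -> coprime v u ->
    (numq (u%:R / v%:R : rat)%R, denq (u%:R / v%:R : rat)%R) = (Posz u, Posz v).
  move=> v_gt0 cvu; rewrite -[(u%:R)%R]/((Posz u)%:~R)%R -[(v%:R)%R]/((Posz v)%:~R)%R.
  rewrite coprimeq_num ?coprimeq_den 1?coprime_sym //.
  by case: v v_gt0 {cvu} => // v _; rewrite gtr0_sg ?mul1r.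
move=> d_gt0 d'_gt0 cdr cdr' E.
by have := numden _ _ d_gt0 cdr; rewrite E numden // => -[-> ->].
Qed.

Lemma frac_mem_Sset ns n d r : n \in ns -> 0 < n -> d %| n -> r < d ->
  (r%:R / d%:R : rat)%R \in Sset ns.
Proof.
move=> n_ns n_gt0 dvd_dn r_lt_d; rewrite /Sset mem_undup.
have d_gt0 : 0 < d by apply: dvdn_gt0 dvd_dn.
have q_gt0 : 0 < n %/ d by rewrite divn_gt0 // dvdn_leq.
have -> : (r%:R / d%:R = (r * (n %/ d))%:R / n%:R :> rat)%R.
  rewrite -{2}(divnK dvd_dn) !natrM [(_ * d%:R)%R]mulrC -mulf_div divff ?mulr1 //.
  by rewrite pnatr_eq0 -lt0n.
apply: (@allpairs_f_dep _ (fun=> nat) _ (fun n r => (r%:R / n%:R : rat)%R) _ (iota 0) _ _ n_ns).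
by rewrite mem_iota add0n /= -{2}(divnK dvd_dn) mulnC ltn_pmul2l.
Qed.

Lemma sum_totient_divisors_seq_le ns : (forall n, n \in ns -> 0 < n) ->
  \sum_(d <- divisors_seq ns) totient d <= Scard ns.
Proof.
move=> ns_gt0.
have D_gt0 d : d \in divisors_seq ns -> 0 < d.
  by case/divisors_seqP=> n /ns_gt0 n_gt0; rewrite -dvdn_divisors // => /dvdn_gt0->.
pose fracs := [seq (r%:R / d%:R : rat)%R
               | d <- divisors_seq ns, r <- [seq r <- iota 0 d | coprime d r]].
have -> : \sum_(d <- divisors_seq ns) totient d = size fracs.
  by rewrite size_allpairs_dep (eq_map size_filter_coprime_iota) sumnE big_map.
apply: uniq_leq_size.
  apply: allpairs_uniq_dep; first exact: undup_uniq.
    by move=> d _; rewrite filter_uniq // iota_uniq.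
  move=> _ _ /allpairsPdep[d [r [dD + ->]]] /allpairsPdep[d' [r' [d'D + ->]]].
  rewrite !mem_filter => /andP[cdr _] /andP[cdr' _] /= E.
  by have [-> ->] := coprime_frac_inj (D_gt0 _ dD) (D_gt0 _ d'D) cdr cdr' E.
move=> _ /allpairsPdep[d [r [/divisors_seqP[n n_ns dvd_dn] + ->]]].
rewrite mem_filter mem_iota add0n => /andP[_ r_lt_d].
have n_gt0 := ns_gt0 _ n_ns.
rewrite -dvdn_divisors // in dvd_dn.
exact: frac_mem_Sset n_ns n_gt0 dvd_dn r_lt_d.
Qed.

Local Notation toC := (map_poly (intr : int -> algC)).

Lemma horner_Cyclotomic_eq0 (w : algC) d : 0 < d ->
  ((toC 'Phi_d).[w] == 0)%R = (d.-primitive_root w)%R.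
Proof.
move=> d_gt0; have [w0 prim_w0] := C_prim_root_exists d_gt0.
by rewrite (Cintr_Cyclotomic prim_w0) -[(_ == 0)%R]/(root _ w) root_cyclotomic.
Qed.

Lemma prim_root_order_inj (w : algC) d e :
  (d.-primitive_root w)%R -> (e.-primitive_root w)%R -> d = e.
Proof.
move=> prim_d prim_e; apply/eqP; rewrite eqn_dvd.
rewrite (prim_order_dvd prim_d) (prim_expr_order prim_e) eqxx /=.
by rewrite (prim_order_dvd prim_e) (prim_expr_order prim_d).
Qed.

Lemma poly_int_eq0_at_prim_root n (z : algC) (q : {poly int}) :
  (n.-primitive_root z)%R -> size q <= totient n -> ((toC q).[z] = 0)%R -> q = 0%R.
Proof.
move=> prim_z size_q qz0; apply/eqP; apply: contraTT size_q => q_neq0.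
have [pz [Dpz _] dvd_pz] := minCpolyP z.
have size_qQ : size (map_poly (intr : int -> rat) q) = size q.
  by apply: size_map_inj_poly; [exact: intr_inj | exact: rmorph0].
have size_pz : size pz = (totient n).+1.
  have <- : size (map_poly (ratr : rat -> algC) pz) = size pz.
    by apply: size_map_inj_poly; [exact: fmorph_inj | exact: rmorph0].
  by rewrite -Dpz (minCpoly_cyclotomic prim_z) size_cyclotomic.
have : (pz %| map_poly (intr : int -> rat) q)%R.
  rewrite -dvd_pz -map_poly_comp /root.
  by rewrite (eq_map_poly (g := intr)) ?qz0 // => c /=; rewrite rmorph_int.
move/dvdp_leq; rewrite -size_poly_eq0 size_qQ size_poly_eq0 size_pz => /(_ q_neq0).
by rewrite -ltnNge.
Qed.

Lemma filter_modulus_shape M (s : seq (nat * nat)) :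
  uniq (map snd s) -> {in s, forall x, x.1 < x.2} ->
  [seq x <- s | x.2 == M] = [::] \/ exists2 a, a < M & [seq x <- s | x.2 == M] = [:: (a, M)].
Proof.
move=> s_uniq s_lt.
have : uniq (map snd [seq x <- s | x.2 == M]).
  exact: subseq_uniq (map_subseq _ (filter_subseq _ _)) s_uniq.
have : {in [seq x <- s | x.2 == M], forall x, x.1 < M /\ x.2 = M}.
  by move=> x; rewrite mem_filter => /andP[/eqP <- /s_lt].
case: [seq x <- s | x.2 == M] => [|[a n] [|[a' n'] f]] f_mod f_uniq; first by left.
  by have [a_lt /= ->] := f_mod _ (mem_head _ _); right; exists a.
have [_ /= n_eq] := f_mod _ (mem_head _ _).
have /f_mod[_ /= n'_eq] : (a', n') \in [:: (a, n), (a', n') & f] by rewrite !inE eqxx orbT.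
by move: f_uniq; rewrite /= inE n_eq n'_eq eqxx.
Qed.

Lemma filter_modulus_eq (w : algC) M (sA sB : seq (nat * nat)) :
  (M.-primitive_root w)%R ->
  uniq (map snd sA) -> {in sA, forall x, x.1 < x.2} ->
  uniq (map snd sB) -> {in sB, forall x, x.1 < x.2} ->
  (\sum_(x <- sA | x.2 == M) w ^+ x.1 = \sum_(x <- sB | x.2 == M) w ^+ x.1)%R ->
  [seq x <- sA | x.2 == M] = [seq x <- sB | x.2 == M].
Proof.
move=> prim_w uA ltA uB ltB; rewrite -[LHS]big_filter -[RHS]big_filter.
have w_neq0 : (w != 0)%R by rewrite (prim_root_eq0 prim_w) -lt0n (prim_order_gt0 prim_w).
have [eA|[a a_lt eA]] := filter_modulus_shape M uA ltA;
have [eB|[b b_lt eB]] := filter_modulus_shape M uB ltB;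
rewrite eA eB ?big_nil ?big_seq1 //= => E.
- by move: (expf_neq0 b w_neq0); rewrite -E eqxx.
- by move: (expf_neq0 a w_neq0); rewrite E eqxx.
- by move/eqP: E; rewrite (eq_prim_root_expr prim_w) !modn_small // => /eqP ->.
Qed.

Section CycloProd.

Variable D : seq nat.

Definition cycloprod : {poly int} := \prod_(d <- D) 'Phi_d.

Definition cycloprod_ndvd n : {poly int} := \prod_(d <- D | ~~ (d %| n)) 'Phi_d.

Definition frac_poly (x : nat * nat) : {poly int} := ('X^(x.1) * cycloprod_ndvd x.2)%R.

Definition frac_sum_poly (s : seq (nat * nat)) : {poly int} :=
  (\sum_(x <- s) frac_poly x)%R.

Definition admissible (x : nat * nat) :=
  [/\ 0 < x.2, x.1 < x.2 & forall d, d %| x.2 -> d \in D].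

Lemma cycloprod_ndvd_monic n : cycloprod_ndvd n \is monic.
Proof. by apply: monic_prod => d _; apply: Cyclotomic_monic. Qed.

Lemma size_cycloprod : size cycloprod = (\sum_(d <- D) totient d).+1.
Proof.
rewrite /cycloprod; elim: D => [|d D' IH]; first by rewrite !big_nil size_poly1.
rewrite !big_cons size_Mmonic ?monic_neq0 ?Cyclotomic_monic //; last first.
  by apply: monic_prod => i _; apply: Cyclotomic_monic.
by rewrite IH size_Cyclotomic addSn addnS.
Qed.

Lemma size_frac_poly x : size (frac_poly x) = x.1 + size (cycloprod_ndvd x.2).
Proof.
rewrite size_Mmonic ?monic_neq0 ?monicXn ?cycloprod_ndvd_monic // size_polyXn.
by rewrite addSn.
Qed.

Hypothesis D_uniq : uniq D.

Lemma cycloprod_split n : 0 < n -> (forall d, d %| n -> d \in D) ->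
  cycloprod = (('X^n - 1) * cycloprod_ndvd n)%R.
Proof.
move=> n_gt0 dvd_D; rewrite /cycloprod (bigID (fun d => d %| n)) /= -big_filter.
rewrite -(prod_Cyclotomic n_gt0); congr (_ * _)%R.
apply/perm_big/uniq_perm; [exact: filter_uniq | exact: divisors_uniq |].
move=> d; rewrite mem_filter -dvdn_divisors //.
by apply/andP/idP=> [[]//|dvd_dn]; split=> //; apply: dvd_D.
Qed.

Lemma size_cycloprod_admissible x : admissible x ->
  size cycloprod = x.2 + size (cycloprod_ndvd x.2).
Proof.
case=> x2_gt0 _ dvd_D; rewrite (cycloprod_split x2_gt0 dvd_D).
rewrite size_Mmonic ?monic_neq0 ?monicXnsubC ?cycloprod_ndvd_monic //.
by rewrite size_XnsubC // addSn.
Qed.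

Lemma size_frac_sum_poly s : {in s, forall x, admissible x} ->
  size (frac_sum_poly s) < size cycloprod.
Proof.
move=> s_adm; rewrite /frac_sum_poly big_seq.
apply: (big_ind (fun q : {poly int} => size q < size cycloprod)).
- by rewrite size_poly0 size_cycloprod.
- by move=> q r q_lt r_lt; rewrite (leq_ltn_trans (size_polyD _ _)) // gtn_max q_lt r_lt.
move=> x /s_adm x_adm; have [_ x1_lt _] := x_adm.
by rewrite size_frac_poly (size_cycloprod_admissible x_adm) ltn_add2r.
Qed.

Lemma modulus_lt_size_cycloprod x : admissible x -> x.2 < size cycloprod.
Proof.
move=> x_adm; rewrite (size_cycloprod_admissible x_adm) -addn1 leq_add2l.
by rewrite lt0n size_poly_eq0 monic_neq0 ?cycloprod_ndvd_monic.
Qed.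

Lemma horner_frac_poly (z : algC) x : admissible x -> (z ^+ x.2 != 1)%R ->
  ((toC (frac_poly x)).[z] = - (toC cycloprod).[z] * (z ^+ x.1 / (1 - z ^+ x.2)))%R.
Proof.
case=> x2_gt0 _ dvd_D zx2; rewrite (cycloprod_split x2_gt0 dvd_D).
rewrite !rmorphM rmorphB /= rmorph1 !hornerM hornerD hornerN hornerC !map_polyXn !hornerXn.
have : (1 - z ^+ x.2 != 0)%R by rewrite subr_eq0 eq_sym.
by move: (horner _ _) => c nz; field.
Qed.

Lemma horner_frac_sum_poly (z : algC) s :
  {in s, forall x, admissible x} -> {in s, forall x, z ^+ x.2 != 1}%R ->
  ((toC (frac_sum_poly s)).[z]
   = - (toC cycloprod).[z] * \sum_(x <- s) z ^+ x.1 / (1 - z ^+ x.2))%R.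
Proof.
move=> s_adm s_z; rewrite /frac_sum_poly rmorph_sum horner_sum mulr_sumr.
by apply: eq_big_seq => x xs; apply: horner_frac_poly; [apply: s_adm | apply: s_z].
Qed.

Section PrimitiveRoot.

Variables (w : algC) (M : nat).
Hypothesis prim_w : (M.-primitive_root w)%R.

Lemma horner_cycloprod_ndvd_neq0 : ((toC (cycloprod_ndvd M)).[w] != 0)%R.
Proof.
rewrite /cycloprod_ndvd rmorph_prod horner_prod prodf_seq_neq0.
apply/allP => -[|d] _; apply/implyP => ndvd_dM.
  by rewrite Cyclotomic0 rmorph1 hornerC oner_eq0.
rewrite horner_Cyclotomic_eq0 //; apply: contra ndvd_dM => prim_d.
by rewrite (prim_root_order_inj prim_d prim_w).
Qed.

Lemma horner_cycloprod_ndvd_eq0 n : M \in D -> ~~ (M %| n) ->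
  ((toC (cycloprod_ndvd n)).[w] = 0)%R.
Proof.
move=> MD ndvd_Mn; apply/eqP.
rewrite /cycloprod_ndvd rmorph_prod horner_prod prodf_seq_eq0.
apply/hasP; exists M => //; rewrite ndvd_Mn /=.
by rewrite horner_Cyclotomic_eq0 ?(prim_order_gt0 prim_w).
Qed.

Lemma horner_frac_sum_poly_prim s : M \in D -> {in s, forall x, 0 < x.2 <= M} ->
  ((toC (frac_sum_poly s)).[w]
   = (toC (cycloprod_ndvd M)).[w] * \sum_(x <- s | x.2 == M) w ^+ x.1)%R.
Proof.
move=> MD s_bnd; rewrite /frac_sum_poly rmorph_sum horner_sum [in RHS]big_mkcond mulr_sumr.
apply: eq_big_seq => x /s_bnd /andP[x2_gt0 x2_le].
rewrite /frac_poly rmorphM /= hornerM map_polyXn hornerXn.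
have [<-|x2_neq] := eqVneq x.2 M; first by rewrite mulrC.
have ndvd : ~~ (M %| x.2).
  by apply/negP => /(dvdn_leq x2_gt0) M_le; move: x2_neq; rewrite eqn_leq x2_le M_le.
by rewrite (horner_cycloprod_ndvd_eq0 MD ndvd) !mulr0.
Qed.

End PrimitiveRoot.

Lemma frac_sum_poly_filter M s :
  frac_sum_poly s = (frac_sum_poly [seq x <- s | x.2 == M]
                     + frac_sum_poly [seq x <- s | x.2 != M])%R.
Proof. by rewrite /frac_sum_poly !big_filter (bigID (fun x => x.2 == M)). Qed.

Lemma frac_sum_poly_inj_bounded N (sA sB : seq (nat * nat)) :
  {in sA ++ sB, forall x, admissible x /\ x.2 <= N} ->
  uniq (map snd sA) -> uniq (map snd sB) ->
  frac_sum_poly sA = frac_sum_poly sB -> sA =i sB.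
Proof.
elim: N sA sB => [|N IH] sA sB adm uA uB E.
  have notin x : x \in sA ++ sB -> false.
    by move=> /adm[[x2_gt0 _ _]]; rewrite leqNgt x2_gt0.
  by move=> x; apply/idP/idP => xs; have := notin x; rewrite mem_cat xs ?orbT => /(_ isT).
set M := N.+1.
have lt_res (s : seq (nat * nat)) : {subset s <= sA ++ sB} -> {in s, forall x, x.1 < x.2}.
  by move=> sub x /sub /adm[[_ ? _] _].
have subA : {subset sA <= sA ++ sB} by move=> x xs; rewrite mem_cat xs.
have subB : {subset sB <= sA ++ sB} by move=> x xs; rewrite mem_cat xs orbT.
have top_eq : [seq x <- sA | x.2 == M] = [seq x <- sB | x.2 == M].
  have [MD|MnD] := boolP (M \in D); last first.
    have no_top (s : seq (nat * nat)) : {subset s <= sA ++ sB} -> [seq x <- s | x.2 == M] = [::].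
      move=> sub; apply/eqP; rewrite -size_eq0 size_filter eqn0Ngt -has_count.
      apply/hasPn => x /sub /adm[[_ _ dvd_D] _]; apply: contra MnD => /eqP <-.
      exact/dvd_D/dvdnn.
    by rewrite !no_top.
  have [w prim_w] := C_prim_root_exists (ltn0Sn N).
  apply: (filter_modulus_eq prim_w uA (lt_res _ subA) uB (lt_res _ subB)).
  have bnd (s : seq (nat * nat)) : {subset s <= sA ++ sB} -> {in s, forall x, 0 < x.2 <= M}.
    by move=> sub x /sub /adm[[-> _ _] ->].
  apply: (mulfI (horner_cycloprod_ndvd_neq0 prim_w)).
  rewrite -(horner_frac_sum_poly_prim prim_w MD (bnd _ subA)).
  by rewrite -(horner_frac_sum_poly_prim prim_w MD (bnd _ subB)) E.
have /IH eq_rest : {in [seq x <- sA | x.2 != M] ++ [seq x <- sB | x.2 != M],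
                    forall x, admissible x /\ x.2 <= N}.
  move=> x; rewrite mem_cat !mem_filter -andb_orr -mem_cat.
  by case/andP=> x2_neq /adm[x_adm x2_le]; split; rewrite // -ltnS ltn_neqAle x2_neq.
have uniq_rest (s : seq (nat * nat)) :
    uniq (map snd s) -> uniq (map snd [seq x <- s | x.2 != M]).
  exact/subseq_uniq/map_subseq/filter_subseq.
have E_rest : frac_sum_poly [seq x <- sA | x.2 != M]
              = frac_sum_poly [seq x <- sB | x.2 != M].
  apply: (addrI (frac_sum_poly [seq x <- sA | x.2 == M])).
  by rewrite -frac_sum_poly_filter top_eq -frac_sum_poly_filter.
move=> x; have := eq_rest (uniq_rest _ uA) (uniq_rest _ uB) E_rest x.
have := congr1 (fun s => x \in s) top_eq; rewrite /= !mem_filter.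
by case: (x.2 == M) => /= [-> | _ ->].
Qed.

Lemma frac_sum_poly_inj (sA sB : seq (nat * nat)) :
  {in sA ++ sB, forall x, admissible x} ->
  uniq (map snd sA) -> uniq (map snd sB) ->
  frac_sum_poly sA = frac_sum_poly sB -> sA =i sB.
Proof.
move=> adm; apply: (@frac_sum_poly_inj_bounded (\max_(x <- sA ++ sB) x.2)).
by move=> x xs; split; [apply: adm | apply: leq_bigmax_seq].
Qed.

End CycloProd.

Lemma frac_sums_eq_mem p (z : algC) (sA sB : seq (nat * nat)) :
  prime p -> (p.-primitive_root z)%R ->
  {in sA ++ sB, forall x, x.1 < x.2} -> uniq (map snd sA) -> uniq (map snd sB) ->
  Scard (map snd (sA ++ sB)) < p ->
  (\sum_(x <- sA) z ^+ x.1 / (1 - z ^+ x.2) = \sum_(x <- sB) z ^+ x.1 / (1 - z ^+ x.2))%R ->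
  sA =i sB.
Proof.
move=> p_prime prim_z lt_res uA uB S_lt_p E.
set D := divisors_seq (map snd (sA ++ sB)).
have D_uniq : uniq D := undup_uniq _.
have adm : {in sA ++ sB, forall x, admissible D x}.
  move=> x xs; have x_lt := lt_res x xs.
  have x2_gt0 : 0 < x.2 := leq_ltn_trans (leq0n _) x_lt.
  split=> // d dvd_dx; apply/divisors_seqP; exists x.2; first exact: map_f.
  by rewrite -dvdn_divisors.
have size_lt_p : size (cycloprod D) <= p.
  rewrite size_cycloprod; apply: leq_ltn_trans S_lt_p; apply: sum_totient_divisors_seq_le.
  by move=> _ /mapP[x /lt_res x_lt ->]; apply: leq_ltn_trans x_lt.
have z_ne1 : {in sA ++ sB, forall x, z ^+ x.2 != 1}%R.
  move=> x /adm x_adm; have [x2_gt0 _ _] := x_adm; rewrite -(prim_order_dvd prim_z).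
  apply/negP => /(dvdn_leq x2_gt0); rewrite leqNgt.
  by rewrite (leq_trans (modulus_lt_size_cycloprod D_uniq x_adm)).
have [admA admB] : {in sA, forall x, admissible D x} /\ {in sB, forall x, admissible D x}.
  by split=> x xs; apply: adm; rewrite mem_cat xs ?orbT.
have [zA zB] : {in sA, forall x, z ^+ x.2 != 1}%R /\ {in sB, forall x, z ^+ x.2 != 1}%R.
  by split=> x xs; apply: z_ne1; rewrite mem_cat xs ?orbT.
apply: (frac_sum_poly_inj adm uA uB); apply/eqP; rewrite -subr_eq0; apply/eqP.
apply: (poly_int_eq0_at_prim_root prim_z).
  rewrite totient_prime // -ltnS prednK ?prime_gt0 //; apply: leq_trans size_lt_p.
  rewrite (leq_ltn_trans (size_polyD _ _)) // size_polyN gtn_max.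
  by rewrite !size_frac_sum_poly.
by rewrite rmorphB hornerD hornerN !horner_frac_sum_poly // E subrr.
Qed.

Theorem corollary1p3 (k l : nat) (a n : 'I_k -> nat) (b m : 'I_l -> nat)
  (hn : forall s, 0 < n s) (ha : forall s, a s < n s) (hninj : injective n)
  (hm : forall t, 0 < m t) (hb : forall t, b t < m t) (hminj : injective m)
  (p : nat) (hp : prime p)
  (hpS : Scard ([seq n s | s : 'I_k] ++ [seq m t | t : 'I_l]) < p)
  (z : algC) (hz : (p.-primitive_root z)%R) :
  (k = l /\ [seq (a s, n s) | s : 'I_k] =i [seq (b t, m t) | t : 'I_l])
  <->
  (\sum_(s : 'I_k) z ^+ a s / (1 - z ^+ n s)
   = \sum_(t : 'I_l) z ^+ b t / (1 - z ^+ m t))%R.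
Proof.
(* [hn] and [hm] are implied by [ha] and [hb]. *)
set sA := [seq (a s, n s) | s : 'I_k]; set sB := [seq (b t, m t) | t : 'I_l].
have uA' : uniq (map snd sA) by rewrite /sA /image_mem -map_comp map_inj_uniq ?enum_uniq.
have uB' : uniq (map snd sB) by rewrite /sB /image_mem -map_comp map_inj_uniq ?enum_uniq.
have [uA uB] := (map_uniq uA', map_uniq uB').
have -> : (\sum_s z ^+ a s / (1 - z ^+ n s) = \sum_(x <- sA) z ^+ x.1 / (1 - z ^+ x.2))%R.
  by rewrite big_image.
have -> : (\sum_t z ^+ b t / (1 - z ^+ m t) = \sum_(x <- sB) z ^+ x.1 / (1 - z ^+ x.2))%R.
  by rewrite big_image.
split=> [[_ eqAB] | E]; first exact/perm_big/uniq_perm.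
have eqAB : sA =i sB.
  apply: (frac_sums_eq_mem hp hz _ uA' uB') E => [x|].
    by rewrite mem_cat => /orP[] /imageP[s _ ->]; [apply: ha | apply: hb].
  suff -> : map snd (sA ++ sB) = [seq n s | s : 'I_k] ++ [seq m t | t : 'I_l] by [].
  by rewrite map_cat /sA /sB /image_mem -map_comp -[X in _ ++ X]map_comp.
split=> //; have := perm_size (uniq_perm uA uB eqAB).
by rewrite !size_image !card_ord.
Qed.
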